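(* Let $B_1,B_2$ be finite commutative groups and $q_1,\dots,q_n>1$ integers, $0\le s\le n$. If $q_1q_2\cdots q_s$ is coprime to $|B_2|$ and $q_{s+1}\cdots q_n$ is coprime to $|B_1|$, then $$(B_1\times B_2)\binom{X_1,\dots,X_n}{\mathbb{Z}_{q_1}\times\cdots\times\mathbb{Z}_{q_n}}=B_1\binom{X_1,\dots,X_s}{\mathbb{Z}_{q_1}\times\cdots\times\mathbb{Z}_{q_s}}\times B_2\binom{X_{s+1},\dots,X_n}{\mathbb{Z}_{q_{s+1}}\times\cdots\times\mathbb{Z}_{q_n}},$$ i.e. a polyfract $(P_1,P_2)$ over $B_1\times B_2$ is $(q_1,\dots,q_n)$-periodic if and only if $P_1$ involves only $X_1,\dots,X_s$ and is $(q_1,\dots,q_s)$-periodic, and $P_2$ involves only $X_{s+1},\dots,X_n$ and is $(q_{s+1},\dots,q_n)$-periodic.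
   Context: $\mathbb{Z}_r=\mathbb{Z}/r\mathbb{Z}$; $\binom{X}{\delta}=X(X-1)\cdots(X-\delta+1)/\delta!$, $\binom{X}{0}=1$. For a finitely generated commutative group $B$, a $B$-polyfract in $X_1,\dots,X_n$ is a formal finite sum $P=\sum_{\delta\in\mathbb{N}^n}P_\delta\prod_j\binom{X_j}{\delta_j}$ with $P_\delta\in B$, evaluated at $x\in\mathbb{Z}^n$ by $P(x)=\sum_\delta(\prod_j\binom{x_j}{\delta_j})P_\delta$; a polyfract over $B_1\times B_2$ is identified with the pair of its coordinate polyfracts. ''$P$ involves $X_j$'' means some $\delta$ with $\delta_j>0$ has $P_\delta\ne0$. $B\binom{X_1,\dots,X_n}{\mathbb{Z}_{q_1}\times\cdots\times\mathbb{Z}_{q_n}}$ is the set of $B$-polyfracts whose evaluation map on $\mathbb{Z}^n$ is $q_j$-periodic in the $j$-th variable for all $j$. *)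

From HB Require Import structures.
From mathcomp Require Import all_boot all_order all_algebra.
Set Implicit Arguments. Unset Strict Implicit. Unset Printing Implicit Defensive.
Import Order.TTheory GRing.Theory Num.Theory.
Local Open Scope ring_scope.

(* Generalized binomial coefficient binom(x, d) = x(x-1)...(x-d+1)/d! for x : int
   (the division is exact). *)
Definition binz (x : int) (d : nat) : int :=
  ((\prod_(i < d) (x - (i : nat)%:Z)) %/ (d`!)%:Z)%Z.

Definition mindex (n D : nat) := {ffun 'I_n -> 'I_D}.

(* A B-polyfract in X_1..X_n: finitely many coefficients P_delta; every finite
   formal sum has all its nonzero multi-indices in some box [0,D)^n, so we
   represent a polyfract by a box bound D and the coefficient map on the box. *)
Definition polyfract (B : zmodType) (n D : nat) := mindex n D -> B.

Definition pf_eval (B : zmodType) n D (P : polyfract B n D) (x : 'I_n -> int) : B :=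
  \sum_(d : mindex n D) P d *~ (\prod_(j < n) binz (x j) (d j)).

Definition involves (B : zmodType) n D (P : polyfract B n D) (j : 'I_n) : Prop :=
  exists d : mindex n D, (0 < (d j : nat))%N /\ P d != 0.

Definition shift n (x : 'I_n -> int) (j : 'I_n) (k : int) : 'I_n -> int :=
  fun i => if i == j then x i + k else x i.

Definition periodic_in (B : zmodType) n D (P : polyfract B n D) (j : 'I_n) (q : nat) : Prop :=
  forall x : 'I_n -> int, pf_eval P (shift x j q%:Z) = pf_eval P x.

Definition pf_fst (B1 B2 : zmodType) n D (P : polyfract (B1 * B2)%type n D)
  : polyfract B1 n D := fun d => (P d).1.
Definition pf_snd (B1 B2 : zmodType) n D (P : polyfract (B1 * B2)%type n D)
  : polyfract B2 n D := fun d => (P d).2.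

From HB Require Import structures.
From mathcomp Require Import all_boot all_order all_algebra all_fingroup cyclic.
From mathcomp Require Import ring.
From Stdlib Require Import FunctionalExtensionality.
Import Order.TTheory GRing.Theory Num.Theory.
Set Implicit Arguments. Unset Strict Implicit.
Local Open Scope ring_scope.

(* Write f = pf_eval P and let diff_j be the forward difference
   f(x + e_j) - f(x) in the j-th variable.  On binomial monomials diff_j acts by
   lowering the j-th exponent (Pascal's rule), so diff_j^(D+1) f = 0 for every
   polyfract with exponents below D.  If f is q-periodic in X_j then g = diff_j f
   has vanishing block sums g(x) + ... + g(x + (q-1) e_j) = f(x + q e_j) - f(x);
   a function with a vanishing iterated difference and vanishing block sums is
   q-torsion, hence zero when q is coprime to |B|.  So f is invariant under
   shifts in X_j, i.e. the part of P involving X_j evaluates to zero, and by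
   uniqueness of binomial coefficients (evaluate at natural points) that part is
   zero: P does not involve X_j.  The theorem follows coordinatewise, because the
   coprimality hypotheses forbid B1 from involving X_(s+1..n) and B2 from
   involving X_(1..s). *)

Definition falling (x : int) (d : nat) : int := \prod_(i < d) (x - (i : nat)%:Z).

Lemma falling_succ x d : falling (x + 1) d.+1 = falling x d.+1 + d.+1%:Z * falling x d.
Proof.
rewrite /falling big_ord_recl big_ord_recr /=.
have -> : \prod_(i < d) (x + 1 - (lift ord0 i : nat)%:Z) = \prod_(i < d) (x - (i : nat)%:Z).
  by apply: eq_bigr => i _; rewrite lift0 intS; ring.
by rewrite intS; ring.
Qed.

Lemma falling0 d : falling 0 d.+1 = 0.
Proof. by rewrite /falling big_ord_recl /= subrr mul0r. Qed.

Lemma fact_dvd_falling d x : ((d`!)%:Z %| falling x d)%Z.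
Proof.
elim: d x => [|d IH] x; first by rewrite fact0 dvd1z.
have dvd_step y : ((d.+1`!)%:Z %| d.+1%:Z * falling y d)%Z.
  by rewrite factS PoszM dvdz_mul.
have up (m : nat) : ((d.+1`!)%:Z %| falling m%:Z d.+1)%Z.
  elim: m => [|m IHm]; first by rewrite falling0 dvdz0.
  by rewrite -addn1 PoszD falling_succ rpredD.
have down (m : nat) : ((d.+1`!)%:Z %| falling (- m%:Z) d.+1)%Z.
  elim: m => [|m IHm]; first by rewrite oppr0 falling0 dvdz0.
  have := falling_succ (- m.+1%:Z) d.
  have -> : - m.+1%:Z + 1 = - m%:Z by rewrite intS; ring.
  move=> e; have -> : falling (- m.+1%:Z) d.+1
    = falling (- m%:Z) d.+1 - d.+1%:Z * falling (- m.+1%:Z) d by rewrite e; ring.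
  by rewrite rpredB.
by case: x => m; [apply: up | rewrite NegzE; apply: down].
Qed.

Lemma fact_neq0 d : (d`!)%:Z != 0.
Proof. by rewrite eqz_nat -lt0n fact_gt0. Qed.

Lemma binz0 x : binz x 0 = 1.
Proof. by rewrite /binz big_ord0 fact0 divz1. Qed.

Lemma binz0n d : binz 0 d.+1 = 0.
Proof. by rewrite /binz -/(falling 0 d.+1) falling0 div0z. Qed.

Lemma binzS x d : binz (x + 1) d.+1 = binz x d.+1 + binz x d.
Proof.
have [a ha] := dvdzP (fact_dvd_falling d.+1 x).
have [b hb] := dvdzP (fact_dvd_falling d x).
rewrite /binz -!/(falling _ _) falling_succ ha hb !mulzK ?fact_neq0 //.
have -> : a * (d.+1`!)%:Z + d.+1%:Z * (b * (d`!)%:Z) = (a + b) * (d.+1`!)%:Z.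
  by rewrite factS PoszM; ring.
by rewrite mulzK ?fact_neq0.
Qed.

Lemma binz_nat (m d : nat) : binz m%:Z d = 'C(m, d)%:Z.
Proof.
elim: m d => [|m IH] [|d]; rewrite ?binz0 ?bin0 //; first by rewrite binz0n bin0n.
have -> : m.+1%:Z = m%:Z + 1 by rewrite -addn1 PoszD.
by rewrite binzS !IH binS PoszD.
Qed.

Section Differences.
Variable n : nat.
Implicit Types (x : 'I_n -> int) (j : 'I_n) (e : 'I_n -> nat).

Definition monomial e x : int := \prod_(i < n) binz (x i) (e i).

Definition expo D (d : mindex n D) : 'I_n -> nat := fun i => d i.

Lemma pf_evalE (B : zmodType) D (P : polyfract B n D) x :
  pf_eval P x = \sum_(d : mindex n D) P d *~ monomial (expo d) x.
Proof. by []. Qed.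

Definition lower e j k : 'I_n -> nat := fun i => if i == j then (e i - k)%N else e i.

Definition diff (B : zmodType) j (g : ('I_n -> int) -> B) : ('I_n -> int) -> B :=
  fun x => g (shift x j 1) - g x.

Lemma shift_shift x j a b : shift (shift x j a) j b = shift x j (a + b).
Proof. by apply: functional_extensionality => i; rewrite /shift; case: eqP => // _; ring. Qed.

Lemma shift0 x j : shift x j 0 = x.
Proof. by apply: functional_extensionality => i; rewrite /shift; case: eqP => // _; rewrite addr0. Qed.

Lemma prod_shift_out e x j k :
  \prod_(i < n | i != j) binz (shift x j k i) (e i) = \prod_(i < n | i != j) binz (x i) (e i).
Proof. by apply: eq_bigr => i /negbTE h; rewrite /shift h. Qed.

Lemma monomial_shift_free e x j k : e j = 0%N -> monomial e (shift x j k) = monomial e x.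
Proof.
by move=> ej0; rewrite /monomial (bigD1 j) // [RHS](bigD1 j) //= prod_shift_out ej0 !binz0.
Qed.

(* Pascal's rule for monomials: diff_j lowers the j-th exponent by one. *)
Lemma diff_monomial e j x :
  diff j (monomial e) x = if (0 < e j)%N then monomial (lower e j 1) x else 0.
Proof.
rewrite /diff /monomial (bigD1 j) // [X in _ - X](bigD1 j) //= prod_shift_out /shift eqxx.
case E: (e j) => [|k]; first by rewrite !binz0 subrr.
rewrite binzS /= [RHS](bigD1 j) //= /lower eqxx E subn1 /=.
under [X in _ = _ * X]eq_bigr => i /negbTE h do rewrite h.
by ring.
Qed.

Lemma lower_lower e j k : lower (lower e j k) j 1 = lower e j k.+1.
Proof.
by apply: functional_extensionality => i; rewrite /lower; case: eqP => // ->; rewrite -subnDA addn1.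
Qed.

Lemma iter_diff_monomial e j k x :
  iter k (diff j) (monomial e) x = if (k <= e j)%N then monomial (lower e j k) x else 0.
Proof.
elim: k x => [|k IH] x.
  by congr monomial; apply: functional_extensionality => i; rewrite /lower subn0; case: eqP.
rewrite iterS {1}/diff !IH.
have step := diff_monomial (lower e j k) j x.
have lower_j : lower e j k j = (e j - k)%N by rewrite /lower eqxx.
rewrite /diff lower_j in step.
case: (ltnP k (e j)) => hk; first by rewrite (ltnW hk) step subn_gt0 hk lower_lower.
by case: ifP => _; [rewrite step subn_gt0 ltnNge hk | rewrite subrr].
Qed.

Lemma iter_diff_eval (B : zmodType) D (P : polyfract B n D) j k x :
  iter k (diff j) (pf_eval P) x
  = \sum_(d : mindex n D) P d *~ iter k (diff j) (monomial (expo d)) x.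
Proof.
elim: k x => [|k IH] x; first by [].
rewrite iterS {1}/diff !IH -sumrB.
by apply: eq_bigr => d _; rewrite -mulrzBr.
Qed.

Lemma iter_diff_eval_vanish (B : zmodType) D (P : polyfract B n D) j x :
  iter D.+1 (diff j) (pf_eval P) x = 0.
Proof.
rewrite iter_diff_eval big1 // => d _.
by rewrite iter_diff_monomial /expo leqNgt ltnS (ltnW (ltn_ord _)) mulr0z.
Qed.

Lemma shift_invariant (T : Type) (g : ('I_n -> int) -> T) j :
  (forall y, g (shift y j 1) = g y) -> forall y k, g (shift y j k) = g y.
Proof.
move=> g1.
have gnat (t : nat) y : g (shift y j t%:Z) = g y.
  elim: t y => [|t IHt] y; first by rewrite shift0.
  by rewrite -addn1 PoszD -shift_shift g1 IHt.
move=> y [t|t]; first exact: gnat.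
by rewrite -[in RHS](shift0 y j) -(addNr t.+1%:Z) -NegzE -shift_shift gnat.
Qed.

Lemma coprime_torsion_eq0 (B : finZmodType) (a : B) q :
  coprime q #|B| -> a *+ q = 0 -> a = 0.
Proof.
move=> cq h.
have dvd_q : (#[a]%g %| q)%N by rewrite order_dvdn FinRing.zmodXgE h.
have dvd_B : (#[a]%g %| #|B|)%N by rewrite -cardsT order_dvdG ?inE.
have : (#[a]%g %| 1)%N by rewrite -(eqP cq) dvdn_gcd dvd_q dvd_B.
by rewrite dvdn1 order_eq1 => /eqP.
Qed.

(* A function with a vanishing m-th difference whose q-block sums along e_j
   vanish is zero, when q is coprime to |B|: its difference satisfies the same
   hypotheses with m-1, so by induction it is shift invariant, and then each
   block sum is q g(x). *)
Lemma block_sums_annihilate (B : finZmodType) j q m (g : ('I_n -> int) -> B) :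
  coprime q #|B| -> (forall x, iter m (diff j) g x = 0) ->
  (forall x, \sum_(t < q) g (shift x j t%:Z) = 0) -> forall x, g x = 0.
Proof.
move=> cq; elim: m g => [|m IH] g // hm hsum.
have diff_g0 : forall x, diff j g x = 0.
  apply: IH => [x|x]; first by rewrite -iterSr.
  rewrite /diff sumrB.
  under eq_bigr do rewrite shift_shift addrC -shift_shift.
  by rewrite !hsum subrr.
have g_inv := shift_invariant (fun y => subr0_eq (diff_g0 y)).
move=> x; apply: (coprime_torsion_eq0 cq).
by rewrite -(hsum x) (eq_bigr (fun _ => g x)) ?sumr_const ?card_ord // => t _; rewrite g_inv.
Qed.

(* A q-periodic evaluation map (q coprime to |B|) is invariant under unit shifts:
   its difference has vanishing (D+1)-st difference and telescoping block sums
   f(x + q e_j) - f(x) = 0. *)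
Lemma periodic_diff_eq0 (B : finZmodType) D (P : polyfract B n D) j q :
  coprime q #|B| -> periodic_in P j q -> forall x, diff j (pf_eval P) x = 0.
Proof.
move=> cq hp; apply: (block_sums_annihilate (j := j) (m := D) cq) => x.
  by rewrite -iterSr iter_diff_eval_vanish.
rewrite -(big_mkord xpredT (fun t => diff j (pf_eval P) (shift x j t%:Z))).
rewrite /diff (telescope_sumr_eq (fun k => pf_eval P (shift x j k%:Z))) //.
  by rewrite hp shift0 subrr.
by move=> k _; rewrite shift_shift -addn1 PoszD.
Qed.

Definition involving_part (B : zmodType) D (P : polyfract B n D) j : polyfract B n D :=
  fun d => if (0 < d j)%N then P d else 0.

(* Setting X_j to 0 kills exactly the monomials involving X_j. *)
Lemma eval_involving_part (B : zmodType) D (P : polyfract B n D) j x :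
  pf_eval (involving_part P j) x = pf_eval P x - pf_eval P (shift x j (- x j)).
Proof.
rewrite !pf_evalE -sumrB; apply: eq_bigr => d _; rewrite /involving_part /expo.
case: (posnP (d j)) => [hd0|hd]; first by rewrite mul0rz monomial_shift_free ?subrr.
rewrite /monomial [X in _ - _ *~ X](bigD1 j) //= /shift eqxx subrr.
by case: (d j : nat) hd => // k _; rewrite binz0n mul0r mulr0z subr0.
Qed.

(* By
   induction on |d|, evaluating at x = d leaves P d plus coefficients of smaller
   multi-indices (binom(d_i, d'_i) = 0 as soon as d'_i > d_i). *)
Lemma pf_eval_eq0 (B : zmodType) D (P : polyfract B n D) :
  (forall x, pf_eval P x = 0) -> forall d, P d = 0.
Proof.
move=> H.
suff ind m (d : mindex n D) : (\sum_(i < n) (d i : nat) < m)%N -> P d = 0.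
  by move=> d; apply: (ind _ d (ltnSn _)).
elim: m d => [|m IH] d // hd.
have := H (fun i => (d i : nat)%:Z); rewrite pf_evalE (bigD1 d) //=.
rewrite [X in _ *~ X]big1 => [|i _]; last by rewrite binz_nat binn.
rewrite big1 ?mulr1z ?addr0 // => d' hd'.
have [/forallP d'_le | /forallPn [i hi]] := boolP [forall i, (d' i <= d i)%N]; last first.
  by rewrite /monomial (bigD1 i) //= binz_nat bin_small ?mul0r ?mulr0z // ltnNge.
have [i hi] : exists i, (d' i : nat) != d i.
  apply/existsP; apply: contraR hd' => /existsPn same; apply/eqP/ffunP => i.
  by apply: val_inj; apply/eqP; rewrite -[_ == _]negbK same.
rewrite IH ?mul0rz //; rewrite (bigD1 i) //= in hd; rewrite (bigD1 i) //=.
rewrite ltnS in hd; apply: leq_trans hd; rewrite -addSn.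
by apply: leq_add; [rewrite ltn_neqAle hi d'_le | apply: leq_sum => k _; apply: d'_le].
Qed.

Lemma not_involves_periodic (B : zmodType) D (P : polyfract B n D) j k :
  ~ involves P j -> periodic_in P j k.
Proof.
move=> hn x; rewrite !pf_evalE; apply: eq_bigr => d _.
have [->|hP] := eqVneq (P d) 0; first by rewrite !mul0rz.
have hd0 : expo d j = 0%N.
  by apply/eqP; rewrite -leqn0 leqNgt; apply/negP => h; apply: hn; exists d.
by rewrite monomial_shift_free.
Qed.

Lemma periodic_not_involves (B : finZmodType) D (P : polyfract B n D) j q :
  coprime q #|B| -> periodic_in P j q -> ~ involves P j.
Proof.
move=> cq hp.
have f_inv := shift_invariant (fun y => subr0_eq (periodic_diff_eq0 cq hp y)).
have part0 : forall x, pf_eval (involving_part P j) x = 0.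
  by move=> x; rewrite eval_involving_part f_inv subrr.
move=> [d [hd hP]]; have := pf_eval_eq0 part0 d.
by rewrite /involving_part hd => Pd0; rewrite Pd0 eqxx in hP.
Qed.

End Differences.

Lemma eval_fst (B1 B2 : zmodType) n D (P : polyfract (B1 * B2)%type n D) x :
  pf_eval (pf_fst P) x = (pf_eval P x).1.
Proof. by rewrite /pf_eval raddf_sum; apply: eq_bigr => d _; rewrite raddfMz. Qed.

Lemma eval_snd (B1 B2 : zmodType) n D (P : polyfract (B1 * B2)%type n D) x :
  pf_eval (pf_snd P) x = (pf_eval P x).2.
Proof. by rewrite /pf_eval raddf_sum; apply: eq_bigr => d _; rewrite raddfMz. Qed.

Lemma coprime_factor n (q : 'I_n -> nat) (C : pred 'I_n) j m :
  C j -> coprime (\prod_(i < n | C i) q i) m -> coprime (q j) m.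
Proof. by move=> Cj; apply: coprime_dvdl; rewrite (bigD1 j) //= dvdn_mulr. Qed.

Theorem theorem3p14 (B1 B2 : finZmodType) (n s : nat) (q : 'I_n -> nat)
  (hq : forall j, (1 < q j)%N) (hs : (s <= n)%N)
  (h1 : coprime (\prod_(j < n | (j < s)%N) q j) #|B2|)
  (h2 : coprime (\prod_(j < n | (s <= j)%N) q j) #|B1|)
  (D : nat) (P : polyfract (B1 * B2)%type n D) :
  (forall j : 'I_n, periodic_in P j (q j)) <->
  ((forall j : 'I_n, (s <= j)%N -> ~ involves (pf_fst P) j) /\
   (forall j : 'I_n, (j < s)%N -> periodic_in (pf_fst P) j (q j)) /\
   (forall j : 'I_n, (j < s)%N -> ~ involves (pf_snd P) j) /\
   (forall j : 'I_n, (s <= j)%N -> periodic_in (pf_snd P) j (q j))).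
Proof.
have evalE y : pf_eval P y = (pf_eval (pf_fst P) y, pf_eval (pf_snd P) y).
  by rewrite eval_fst eval_snd; case: (pf_eval P y).
split=> [hP | [fst_free [fst_per [snd_free snd_per]]] j x].
  have per1 j : periodic_in (pf_fst P) j (q j) by move=> x; rewrite !eval_fst hP.
  have per2 j : periodic_in (pf_snd P) j (q j) by move=> x; rewrite !eval_snd hP.
  split; [move=> j hj | split; [by move=> j _ | split; [move=> j hj | by move=> j _]]].
    exact: periodic_not_involves (coprime_factor hj h2) (per1 j).
  exact: periodic_not_involves (coprime_factor hj h1) (per2 j).
have [hj | hj] := ltnP j s.
  by rewrite !evalE fst_per // (not_involves_periodic _ (snd_free j hj)).
by rewrite !evalE snd_per // (not_involves_periodic _ (fst_free j hj)).
Qed.
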